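(* Let $S$ be a gcd-category and $a,b\in S$. (1) If $\mathrm{s}(a)=\mathrm{s}(b)$, the following are equivalent: $\varepsilon_S(a),\varepsilon_S(b)$ have a right lcm in $\mathrm{U_{mon}}(S)$; $\varepsilon_S(a),\varepsilon_S(b)$ have a common right multiple in $\mathrm{U_{mon}}(S)$; $a,b$ have a right lcm $a\vee b$ in $S$; $a,b$ have a common right multiple in $S$. When these hold, $\varepsilon_S(a\vee b)$ is the right lcm of $\varepsilon_S(a),\varepsilon_S(b)$. (2) Dually, if $\mathrm{t}(a)=\mathrm{t}(b)$, the following are equivalent: $\varepsilon_S(a),\varepsilon_S(b)$ have a left lcm in $\mathrm{U_{mon}}(S)$; they have a common left multiple there; $a,b$ have a left lcm $a\mathbin{\widetilde\vee} b$ in $S$; $a,b$ have a common left multiple in $S$; and then $\varepsilon_S(a\mathbin{\widetilde\vee} b)$ is the left lcm of $\varepsilon_S(a),\varepsilon_S(b)$.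
   Context: Categories are arrow-only: a set $S$ with partial associative multiplication, identities $\mathrm{Id}\,S$, source/target identities $\mathrm{s}(x),\mathrm{t}(x)$. $\mathrm{U_{mon}}(S)$ is the monoid presented by generators $\varepsilon_S(x)$ ($x\in S$) and relations $\varepsilon_S(e)=1$ ($e\in\mathrm{Id}\,S$), $\varepsilon_S(x)\varepsilon_S(y)=\varepsilon_S(xy)$ whenever $xy$ is defined. In a category or monoid $C$, $a\leqslant_C b$ iff $b=ax$ for some $x$ ($b$ is a right multiple of $a$), and $a\mathbin{\widetilde\leqslant}_C b$ iff $b=xa$ for some $x$ ($b$ a left multiple of $a$). Right lcm = least upper bound for $\leqslant$; left lcm = least upper bound for $\mathbin{\widetilde\leqslant}$; left/right gcd = greatest lower bound for $\leqslant$/$\mathbin{\widetilde\leqslant}$. $S$ is conical if $xy\in\mathrm{Id}\,S$ implies $x\in\mathrm{Id}\,S$. A gcd-category is a conical, left and right cancellative category in which any two elements with the same source have a left gcd and any two elements with the same target have a right gcd. *)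

From Stdlib Require Import List.
Import ListNotations.
Set Implicit Arguments.

(* An arrow-only category: carrier, source/target maps (valued in identities),
   and a multiplication [mul x y] which is *defined* exactly when
   [tgt x = src y]; its values outside that domain are irrelevant. *)
Record Category := {
  carrier :> Type;
  src : carrier -> carrier;
  tgt : carrier -> carrier;
  mul : carrier -> carrier -> carrier;
  src_src : forall x, src (src x) = src x;
  tgt_src : forall x, tgt (src x) = src x;
  src_tgt : forall x, src (tgt x) = tgt x;
  tgt_tgt : forall x, tgt (tgt x) = tgt x;
  src_mul : forall x y, tgt x = src y -> src (mul x y) = src x;
  tgt_mul : forall x y, tgt x = src y -> tgt (mul x y) = tgt y;
  mul_src : forall x, mul (src x) x = x;
  mul_tgt : forall x, mul x (tgt x) = x;
  mulA : forall x y z, tgt x = src y -> tgt y = src z ->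
           mul (mul x y) z = mul x (mul y z)
}.

Arguments src {c}. Arguments tgt {c}. Arguments mul {c}.

Section Cat.
Variable S : Category.

Definition defd (x y : S) : Prop := tgt x = src y.

Definition isId (e : S) : Prop := src e = e.

Definition rdiv (a b : S) : Prop := exists x, defd a x /\ mul a x = b.
Definition ldiv (a b : S) : Prop := exists x, defd x a /\ mul x a = b.

Definition is_rlcm (a b c : S) : Prop :=
  rdiv a c /\ rdiv b c /\ forall d, rdiv a d -> rdiv b d -> rdiv c d.
Definition is_llcm (a b c : S) : Prop :=
  ldiv a c /\ ldiv b c /\ forall d, ldiv a d -> ldiv b d -> ldiv c d.
Definition is_lgcd (a b c : S) : Prop :=
  rdiv c a /\ rdiv c b /\ forall d, rdiv d a -> rdiv d b -> rdiv d c.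
Definition is_rgcd (a b c : S) : Prop :=
  ldiv c a /\ ldiv c b /\ forall d, ldiv d a -> ldiv d b -> ldiv d c.

Definition conical : Prop :=
  forall x y, defd x y -> isId (mul x y) -> isId x.
Definition left_cancellative : Prop :=
  forall a x y, defd a x -> defd a y -> mul a x = mul a y -> x = y.
Definition right_cancellative : Prop :=
  forall a x y, defd x a -> defd y a -> mul x a = mul y a -> x = y.

Definition gcd_category : Prop :=
  conical /\ left_cancellative /\ right_cancellative /\
  (forall a b, src a = src b -> exists c, is_lgcd a b c) /\
  (forall a b, tgt a = tgt b -> exists c, is_rgcd a b c).

(* U_mon(S): the monoid presented by generators eps(x), x in S, and
   relations eps(e) = 1 (e in Id S), eps(x) eps(y) = eps(xy) when xy is
   defined.  Realised as the free monoid (list S, concatenation) modulo the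
   congruence [ueq] generated by these relations. *)
Inductive ueq : list S -> list S -> Prop :=
  | ueq_id : forall e u v, isId e -> ueq (u ++ e :: v) (u ++ v)
  | ueq_mul : forall x y u v, defd x y ->
      ueq (u ++ x :: y :: v) (u ++ mul x y :: v)
  | ueq_refl : forall u, ueq u u
  | ueq_sym : forall u v, ueq u v -> ueq v u
  | ueq_trans : forall u v w, ueq u v -> ueq v w -> ueq u w.

Definition eps (x : S) : list S := [x].

Definition Urdiv (u v : list S) : Prop := exists w, ueq (u ++ w) v.
Definition Uldiv (u v : list S) : Prop := exists w, ueq (w ++ u) v.

Definition U_is_rlcm (u v m : list S) : Prop :=
  Urdiv u m /\ Urdiv v m /\ forall d, Urdiv u d -> Urdiv v d -> Urdiv m d.
Definition U_is_llcm (u v m : list S) : Prop :=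
  Uldiv u m /\ Uldiv v m /\ forall d, Uldiv u d -> Uldiv v d -> Uldiv m d.

End Cat.
Arguments defd {S}. Arguments isId {S}. Arguments rdiv {S}. Arguments ldiv {S}.
Arguments is_rlcm {S}. Arguments is_llcm {S}. Arguments is_lgcd {S}. Arguments is_rgcd {S}.
Arguments ueq {S}. Arguments eps {S}. Arguments Urdiv {S}. Arguments Uldiv {S}.
Arguments U_is_rlcm {S}. Arguments U_is_llcm {S}.

(* In a conical category every word of U_mon(S) has a greedy normal form, and
   if the word is congruent to eps(x) w with x not an identity, the first
   letter of its normal form is a right multiple of x.  Hence if eps(a) and
   eps(b) divide the same element of U_mon(S) (a, b not identities), that
   letter is a common right multiple of a and b in S, and a right lcm c in S
   divides it, so eps(c) divides the element.  In S, a common right multiple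
   a x = b y yields a right lcm: dividing x and y by their right gcd z gives
   a x' = b y' with x', y' having no common non-trivial left divisor, and the
   left gcd of a x' with any common right multiple e is then a x' itself.
   The left-handed statement is the right-handed one in the opposite category. *)
From Stdlib Require Import List ClassicalEpsilon.
Import ListNotations.
Set Implicit Arguments.

Section Category.
Variable S : Category.
Implicit Types (a b c d e x y z : S) (u v w : list S).

Lemma tgt_isId e : isId e -> tgt e = e.
Proof. intro He. rewrite <- He. apply tgt_src. Qed.

Lemma mul_isId_l x y : isId x -> defd x y -> mul x y = y.
Proof. intros Hx Dxy. unfold defd in Dxy. rewrite (tgt_isId Hx) in Dxy. subst x. apply mul_src. Qed.

Lemma mul_isId_r x y : isId y -> defd x y -> mul x y = x.
Proof. intros Hy Dxy. unfold defd, isId in *. rewrite Hy in Dxy. subst y. apply mul_tgt. Qed.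

Lemma defd_mulr x y z : defd x y -> defd y z -> defd (mul x y) z.
Proof. unfold defd. intros Dxy Dyz. now rewrite tgt_mul. Qed.

Lemma defd_mull x y z : defd x y -> defd y z -> defd x (mul y z).
Proof. unfold defd. intros Dxy Dyz. now rewrite src_mul. Qed.

Lemma defd_tgt x : defd x (tgt x).
Proof. unfold defd. now rewrite src_tgt. Qed.

Lemma conical_r x y : conical S -> defd x y -> isId (mul x y) -> isId y.
Proof. intros HC Dxy Hxy. now rewrite (mul_isId_l (HC x y Dxy Hxy) Dxy) in Hxy. Qed.

Lemma rdiv_refl a : rdiv a a.
Proof. exists (tgt a). split; [apply defd_tgt | apply mul_tgt]. Qed.

Lemma rdiv_mul a x : defd a x -> rdiv a (mul a x).
Proof. intro D. now exists x. Qed.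

Lemma rdiv_src a b : rdiv a b -> src a = src b.
Proof. intros (x & D & <-). now rewrite src_mul. Qed.

Lemma rdiv_isId a b : isId a -> src a = src b -> rdiv a b.
Proof.
  intros Ha Hab. exists b.
  assert (D : defd a b) by (unfold defd; now rewrite (tgt_isId Ha), <- Hab).
  split; [exact D | now apply mul_isId_l].
Qed.

Lemma ueq_app_l w u v : ueq u v -> ueq (w ++ u) (w ++ v).
Proof.
  induction 1.
  - rewrite !app_assoc. now apply ueq_id.
  - rewrite !app_assoc. now apply ueq_mul.
  - apply ueq_refl.
  - now apply ueq_sym.
  - eapply ueq_trans; eassumption.
Qed.

Lemma ueq_app_r w u v : ueq u v -> ueq (u ++ w) (v ++ w).
Proof.
  induction 1.
  - rewrite <- !app_assoc. exact (ueq_id u (v ++ w) H).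
  - rewrite <- !app_assoc. exact (ueq_mul u (v ++ w) H).
  - apply ueq_refl.
  - now apply ueq_sym.
  - eapply ueq_trans; eassumption.
Qed.

Lemma Urdiv_trans u v w : Urdiv u v -> Urdiv v w -> Urdiv u w.
Proof.
  intros (p & Hp) (q & Hq). exists (p ++ q).
  rewrite app_assoc. eapply ueq_trans; [apply ueq_app_r, Hp | exact Hq].
Qed.

Lemma Urdiv_eps_of_rdiv a c : rdiv a c -> Urdiv (eps a) (eps c).
Proof. intros (x & D & <-). exists [x]. exact (ueq_mul [] [] D). Qed.

(* In a conical category a product of non-identities is not an
   identity, which is what makes [nf] respect the relation
   eps(x) eps(y) = eps(xy) ([nf_cons_mul]). *)
Definition nf_cons x (s : list S) : list S :=
  if excluded_middle_informative (isId x) then s else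
  match s with
  | z :: s' => if excluded_middle_informative (defd x z) then mul x z :: s' else x :: s
  | [] => [x]
  end.

Definition nf u : list S := fold_right nf_cons [] u.

Lemma nf_cons_isId x s : isId x -> nf_cons x s = s.
Proof. intro Hx. unfold nf_cons. now destruct (excluded_middle_informative (isId x)). Qed.

Lemma ueq_nf_cons x s : ueq (x :: s) (nf_cons x s).
Proof.
  unfold nf_cons. destruct (excluded_middle_informative (isId x)) as [Hx|Hx].
  { exact (ueq_id [] s Hx). }
  destruct s as [|z s']; [apply ueq_refl|].
  destruct (excluded_middle_informative (defd x z)) as [D|D].
  - exact (ueq_mul [] s' D).
  - apply ueq_refl.
Qed.

Lemma ueq_nf u : ueq u (nf u).
Proof.
  induction u as [|x u IH]; [apply ueq_refl|].
  eapply ueq_trans; [exact (ueq_app_l [x] IH) | apply ueq_nf_cons].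
Qed.

Lemma nf_cons_rmultiple a s :
  ~ isId a -> exists e s', nf_cons a s = e :: s' /\ rdiv a e.
Proof.
  intro Ha. unfold nf_cons. destruct (excluded_middle_informative (isId a)); [tauto|].
  destruct s as [|z s'].
  - exists a, []. split; [reflexivity | apply rdiv_refl].
  - destruct (excluded_middle_informative (defd a z)) as [D|D].
    + exists (mul a z), s'. split; [reflexivity | now apply rdiv_mul].
    + exists a, (z :: s'). split; [reflexivity | apply rdiv_refl].
Qed.

Lemma Urdiv_eps_of_nf c e (s d : list S) : nf d = e :: s -> rdiv c e -> Urdiv (eps c) d.
Proof.
  intros Hd (y & D & Hy). exists (y :: s).
  eapply ueq_trans; [exact (ueq_mul [] s D) |].
  simpl. rewrite Hy, <- Hd. apply ueq_sym, ueq_nf.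
Qed.

Section Conical.
Hypothesis HC : conical S.

Lemma nf_cons_mul x y s : defd x y -> nf_cons x (nf_cons y s) = nf_cons (mul x y) s.
Proof.
  intro Dxy.
  destruct (excluded_middle_informative (isId x)) as [Hx|Hx].
  { now rewrite (nf_cons_isId _ Hx), (mul_isId_l Hx Dxy). }
  destruct (excluded_middle_informative (isId y)) as [Hy|Hy].
  { now rewrite (nf_cons_isId _ Hy), (mul_isId_r Hy Dxy). }
  unfold nf_cons.
  destruct (excluded_middle_informative (isId x)); [tauto|].
  destruct (excluded_middle_informative (isId y)); [tauto|].
  destruct (excluded_middle_informative (isId (mul x y))) as [Hxy|_].
  { destruct Hx. eapply HC; eassumption. }
  destruct s as [|z s'].
  - destruct (excluded_middle_informative (defd x y)); tauto.
  - assert (Hyz : defd y z <-> defd (mul x y) z)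
      by (unfold defd; now rewrite tgt_mul).
    destruct (excluded_middle_informative (defd y z)) as [Dyz|Dyz];
      destruct (excluded_middle_informative (defd (mul x y) z)); try tauto.
    + destruct (excluded_middle_informative (defd x (mul y z))) as [_|N].
      * now rewrite mulA.
      * destruct (N (defd_mull Dxy Dyz)).
    + destruct (excluded_middle_informative (defd x y)); tauto.
Qed.

Lemma ueq_nf_eq u v : ueq u v -> nf u = nf v.
Proof.
  unfold nf. induction 1; try congruence.
  - rewrite !fold_right_app. simpl. now rewrite nf_cons_isId.
  - rewrite !fold_right_app. simpl. now rewrite nf_cons_mul.
Qed.

Lemma Urdiv_eps_nf a (d : list S) :
  ~ isId a -> Urdiv (eps a) d -> exists e s, nf d = e :: s /\ rdiv a e.
Proof. intros Ha (w & Hw). rewrite <- (ueq_nf_eq Hw). now apply nf_cons_rmultiple. Qed.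

Lemma Urdiv_common_rmultiple a b (d : list S) :
  src a = src b -> Urdiv (eps a) d -> Urdiv (eps b) d ->
  exists e, rdiv a e /\ rdiv b e /\ Urdiv (eps e) d.
Proof.
  intros Hab Ha Hb.
  destruct (excluded_middle_informative (isId a)) as [Ia|Ia].
  { exists b. split; [now apply rdiv_isId | split; [apply rdiv_refl | exact Hb]]. }
  destruct (excluded_middle_informative (isId b)) as [Ib|Ib].
  { exists a. split; [apply rdiv_refl | split; [now apply rdiv_isId | exact Ha]]. }
  destruct (Urdiv_eps_nf Ia Ha) as (e & s & Hd & Hae).
  destruct (Urdiv_eps_nf Ib Hb) as (e' & s' & Hd' & Hbe').
  rewrite Hd in Hd'. injection Hd' as <- <-.
  exists e. split; [exact Hae | split; [exact Hbe' |]].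
  exact (Urdiv_eps_of_nf d Hd (rdiv_refl e)).
Qed.

Lemma U_is_rlcm_eps a b c :
  src a = src b -> is_rlcm a b c -> U_is_rlcm (eps a) (eps b) (eps c).
Proof.
  intros Hab (Hac & Hbc & Hc).
  split; [now apply Urdiv_eps_of_rdiv | split; [now apply Urdiv_eps_of_rdiv |]].
  intros d Ha Hb.
  destruct (Urdiv_common_rmultiple Hab Ha Hb) as (e & Hae & Hbe & He).
  exact (Urdiv_trans (Urdiv_eps_of_rdiv (Hc e Hae Hbe)) He).
Qed.

End Conical.

Definition ldiv_coprime x y : Prop := forall h, ldiv h x -> ldiv h y -> isId h.

Section GcdCategory.
Hypothesis HC : conical S.
Hypothesis HL : left_cancellative S.
Hypothesis HR : right_cancellative S.

Lemma rgcd_cofactors_coprime x y z x' y' :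
  is_rgcd x y z -> defd x' z -> mul x' z = x -> defd y' z -> mul y' z = y ->
  ldiv_coprime x' y'.
Proof.
  intros (_ & _ & Hz) Dx Ex Dy Ey h (s & Dsh & Es) (t & Dth & Et).
  assert (Dhz : defd h z) by (unfold defd in *; now rewrite <- Dx, <- Es, tgt_mul).
  assert (Hx : ldiv (mul h z) x).
  { exists s. split; [now apply defd_mull | subst; symmetry; now apply mulA]. }
  assert (Hy : ldiv (mul h z) y).
  { exists t. split; [now apply defd_mull | subst; symmetry; now apply mulA]. }
  destruct (Hz _ Hx Hy) as (k & Dk & Ek).
  assert (Dkh : defd k h) by (unfold defd in *; now rewrite Dk, src_mul).
  assert (Ekh : mul k h = src z).
  { apply (HR (a := z)); [now apply defd_mulr | unfold defd; apply tgt_src |].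
    rewrite mulA, Ek, mul_src; auto. }
  apply (conical_r HC Dkh). rewrite Ekh. apply src_src.
Qed.

Hypothesis lgcd_ex : forall a b, src a = src b -> exists c, is_lgcd a b c.

Lemma rlcm_of_coprime_cofactors a b x y :
  defd a x -> defd b y -> mul a x = mul b y -> ldiv_coprime x y ->
  is_rlcm a b (mul a x).
Proof.
  intros Dax Dby Eab Hxy.
  assert (Hbc : rdiv b (mul a x)) by (rewrite Eab; now apply rdiv_mul).
  split; [now apply rdiv_mul | split; [exact Hbc |]].
  intros e Hae Hbe.
  assert (Hce : src (mul a x) = src e)
    by (rewrite <- (rdiv_src Hae); now rewrite src_mul).
  destruct (lgcd_ex _ _ Hce) as (g & (h & Dgh & Egh) & Hge & Hg).
  destruct (Hg a (rdiv_mul Dax) Hae) as (s & Das & Es).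
  destruct (Hg b Hbc Hbe) as (t & Dbt & Et).
  assert (Dsh : defd s h) by (unfold defd in *; now rewrite <- Dgh, <- Es, tgt_mul).
  assert (Dth : defd t h) by (unfold defd in *; now rewrite <- Dgh, <- Et, tgt_mul).
  assert (Ex : x = mul s h).
  { apply (HL (a := a)); [exact Dax | now apply defd_mull |].
    rewrite <- mulA, Es; auto. }
  assert (Ey : y = mul t h).
  { apply (HL (a := b)); [exact Dby | now apply defd_mull |].
    rewrite <- mulA, Et, <- Eab; auto. }
  assert (Hh : isId h) by (apply Hxy; [exists s | exists t]; auto).
  rewrite <- Egh, (mul_isId_r Hh Dgh). exact Hge.
Qed.

Hypothesis rgcd_ex : forall a b, tgt a = tgt b -> exists c, is_rgcd a b c.

Lemma rlcm_of_common_rmultiple a b d :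
  rdiv a d -> rdiv b d -> exists c, is_rlcm a b c.
Proof.
  intros (x & Dax & Ex) (y & Dby & Ey).
  assert (Hxy : tgt x = tgt y) by now rewrite <- (tgt_mul _ _ _ Dax), <- (tgt_mul _ _ _ Dby), Ex, Ey.
  destruct (rgcd_ex _ _ Hxy) as (z & Hz).
  pose proof Hz as ((x' & Dx' & Ex') & (y' & Dy' & Ey') & _).
  assert (Dax' : defd a x') by (unfold defd in *; now rewrite Dax, <- Ex', src_mul).
  assert (Dby' : defd b y') by (unfold defd in *; now rewrite Dby, <- Ey', src_mul).
  assert (Eab : mul a x' = mul b y').
  { apply (HR (a := z)); try now apply defd_mulr.
    rewrite !mulA, Ex', Ey', Ex, Ey; auto. }
  exists (mul a x').
  exact (rlcm_of_coprime_cofactors Dax' Dby' Eab (rgcd_cofactors_coprime Hz Dx' Ex' Dy' Ey')).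
Qed.

End GcdCategory.
End Category.

Lemma rlcm_equivalences (S : Category) (HS : gcd_category S) (a b : S) :
  src a = src b ->
     ((exists m, U_is_rlcm (eps a) (eps b) m) <->
      (exists m, Urdiv (eps a) m /\ Urdiv (eps b) m)) /\
     ((exists m, Urdiv (eps a) m /\ Urdiv (eps b) m) <->
      (exists c, is_rlcm a b c)) /\
     ((exists c, is_rlcm a b c) <->
      (exists c, rdiv a c /\ rdiv b c)) /\
     (forall c, is_rlcm a b c -> U_is_rlcm (eps a) (eps b) (eps c)).
Proof.
  destruct HS as (HC & HL & HR & Hlgcd & Hrgcd). intro Hab.
  assert (U_lcm : forall c, is_rlcm a b c -> U_is_rlcm (eps a) (eps b) (eps c))
    by (intros c; now apply U_is_rlcm_eps).
  assert (U_cm_S_cm : (exists m, Urdiv (eps a) m /\ Urdiv (eps b) m) ->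
                      exists c, rdiv a c /\ rdiv b c).
  { intros (m & Ha & Hb).
    destruct (Urdiv_common_rmultiple HC Hab Ha Hb) as (e & Hae & Hbe & _). eauto. }
  assert (S_cm_S_lcm : (exists c, rdiv a c /\ rdiv b c) -> exists c, is_rlcm a b c)
    by (intros (d & Ha & Hb); eapply rlcm_of_common_rmultiple; eauto).
  assert (S_lcm_U_lcm : (exists c, is_rlcm a b c) -> exists m, U_is_rlcm (eps a) (eps b) m)
    by (intros (c & Hc); eauto).
  assert (U_lcm_U_cm : (exists m, U_is_rlcm (eps a) (eps b) m) ->
                       exists m, Urdiv (eps a) m /\ Urdiv (eps b) m)
    by (intros (m & Ha & Hb & _); eauto).
  assert (S_lcm_S_cm : (exists c, is_rlcm a b c) -> exists c, rdiv a c /\ rdiv b c)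
    by (intros (c & Ha & Hb & _); eauto).
  split; [tauto | split; [tauto | split; [tauto | exact U_lcm]]].
Qed.

Definition Op (S : Category) : Category :=
  {| carrier := S; src := @tgt S; tgt := @src S; mul x y := mul y x;
     src_src := @tgt_tgt S; tgt_src := @src_tgt S;
     src_tgt := @tgt_src S; tgt_tgt := @src_src S;
     src_mul x y H := tgt_mul S y x (eq_sym H);
     tgt_mul x y H := src_mul S y x (eq_sym H);
     mul_src := @mul_tgt S; mul_tgt := @mul_src S;
     mulA x y z Hxy Hyz := eq_sym (mulA S z y x (eq_sym Hyz) (eq_sym Hxy)) |}.

Section Opposite.
Variable S : Category.
Implicit Types (a b c x y : S) (u v m : list S).

Lemma defd_op x y : @defd (Op S) x y <-> defd y x.
Proof. unfold defd. simpl. split; apply eq_sym. Qed.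

Lemma isId_op x : @isId (Op S) x <-> isId x.
Proof.
  unfold isId. simpl. split; intro H.
  - rewrite <- H. apply src_tgt.
  - rewrite <- H. apply tgt_src.
Qed.

Lemma rdiv_op a c : @rdiv (Op S) a c <-> ldiv a c.
Proof. split; intros (x & D & E); exists x; split; auto; now apply defd_op. Qed.

Lemma ldiv_op a c : @ldiv (Op S) a c <-> rdiv a c.
Proof. split; intros (x & D & E); exists x; split; auto; now apply defd_op. Qed.

Lemma is_rlcm_op a b c : @is_rlcm (Op S) a b c <-> is_llcm a b c.
Proof.
  unfold is_rlcm, is_llcm. setoid_rewrite rdiv_op. reflexivity.
Qed.

Lemma gcd_category_op : gcd_category S -> gcd_category (Op S).
Proof.
  intros (HC & HL & HR & Hlgcd & Hrgcd).
  split; [|split; [|split; [|split]]].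
  - intros x y D I. apply isId_op. apply defd_op in D. apply isId_op in I.
    exact (conical_r HC D I).
  - intros a x y Dx Dy. apply HR; now apply defd_op.
  - intros a x y Dx Dy. apply HL; now apply defd_op.
  - intros a b E. destruct (Hrgcd a b E) as (c & Hc). exists c.
    unfold is_lgcd, is_rgcd in *. now setoid_rewrite rdiv_op.
  - intros a b E. destruct (Hlgcd a b E) as (c & Hc). exists c.
    unfold is_lgcd, is_rgcd in *. now setoid_rewrite ldiv_op.
Qed.

Lemma rev_app_cons (A : Type) (u v : list A) (x : A) : rev (u ++ x :: v) = rev v ++ x :: rev u.
Proof. rewrite rev_app_distr. simpl. now rewrite <- app_assoc. Qed.

Lemma ueq_rev_op u v : ueq u v -> @ueq (Op S) (rev u) (rev v).
Proof.
  induction 1.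
  - rewrite rev_app_cons, rev_app_distr. apply (@ueq_id (Op S)). now apply isId_op.
  - rewrite !rev_app_cons. simpl.
    rewrite <- app_assoc. apply (@ueq_mul (Op S) y x). now apply defd_op.
  - apply ueq_refl.
  - now apply ueq_sym.
  - eapply ueq_trans; eassumption.
Qed.

Lemma ueq_op_rev u v : @ueq (Op S) u v -> ueq (rev u) (rev v).
Proof.
  induction 1.
  - rewrite rev_app_cons, rev_app_distr. exact (@ueq_id S e (rev v) (rev u) (proj1 (isId_op e) H)).
  - rewrite !rev_app_cons. simpl.
    rewrite <- app_assoc. exact (@ueq_mul S y x (rev v) (rev u) (proj1 (defd_op x y) H)).
  - apply ueq_refl.
  - now apply ueq_sym.
  - eapply ueq_trans; eassumption.
Qed.

Lemma Uldiv_op u m : Uldiv u m <-> @Urdiv (Op S) (rev u) (rev m).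
Proof.
  split; intros (w & Hw); exists (rev w).
  - rewrite <- rev_app_distr. now apply ueq_rev_op.
  - apply ueq_op_rev in Hw. now rewrite rev_app_distr, !rev_involutive in Hw.
Qed.

Lemma U_is_llcm_of_op u v m :
  @U_is_rlcm (Op S) (rev u) (rev v) (rev m) -> U_is_llcm u v m.
Proof.
  intros (Hu & Hv & Hm).
  split; [now apply Uldiv_op | split; [now apply Uldiv_op |]].
  intros d Hud Hvd. apply Uldiv_op, Hm; now apply Uldiv_op.
Qed.

End Opposite.

Lemma llcm_equivalences (S : Category) (HS : gcd_category S) (a b : S) :
  tgt a = tgt b ->
     ((exists m, U_is_llcm (eps a) (eps b) m) <->
      (exists m, Uldiv (eps a) m /\ Uldiv (eps b) m)) /\
     ((exists m, Uldiv (eps a) m /\ Uldiv (eps b) m) <->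
      (exists c, is_llcm a b c)) /\
     ((exists c, is_llcm a b c) <->
      (exists c, ldiv a c /\ ldiv b c)) /\
     (forall c, is_llcm a b c -> U_is_llcm (eps a) (eps b) (eps c)).
Proof.
  intro Hab.
  destruct (@rlcm_equivalences (Op S) (gcd_category_op HS) a b Hab)
    as (_ & U_cm_S_lcm & S_lcm_S_cm & U_lcm).
  assert (U_lcm' : forall c, is_llcm a b c -> U_is_llcm (eps a) (eps b) (eps c))
    by (intros c Hc; apply U_is_llcm_of_op, U_lcm, is_rlcm_op, Hc).
  assert (U_cm_U_cm' : (exists m, Uldiv (eps a) m /\ Uldiv (eps b) m) ->
                       exists m, @Urdiv (Op S) (eps a) m /\ @Urdiv (Op S) (eps b) m)
    by (intros (m & Ha & Hb); exists (rev m); split; [exact (proj1 (Uldiv_op _ _ _) Ha) | exact (proj1 (Uldiv_op _ _ _) Hb)]).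
  assert (S_lcm_S_lcm' : (exists c, is_llcm a b c) <-> exists c, @is_rlcm (Op S) a b c)
    by (split; intros (c & Hc); exists c; now apply is_rlcm_op).
  assert (S_cm_S_cm' : (exists c, ldiv a c /\ ldiv b c) <->
                       exists c, @rdiv (Op S) a c /\ @rdiv (Op S) b c)
    by (split; intros (c & Ha & Hb); exists c; split; now apply rdiv_op).
  assert (S_lcm_U_lcm : (exists c, is_llcm a b c) -> exists m, U_is_llcm (eps a) (eps b) m)
    by (intros (c & Hc); eauto).
  assert (U_lcm_U_cm : (exists m, U_is_llcm (eps a) (eps b) m) ->
                       exists m, Uldiv (eps a) m /\ Uldiv (eps b) m)
    by (intros (m & Ha & Hb & _); eauto).
  split; [tauto | split; [tauto | split; [tauto | exact U_lcm']]].
Qed.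

Theorem proposition5p10 (S : Category) (HS : gcd_category S) (a b : S) :
  (src a = src b ->
     ((exists m, U_is_rlcm (eps a) (eps b) m) <->
      (exists m, Urdiv (eps a) m /\ Urdiv (eps b) m)) /\
     ((exists m, Urdiv (eps a) m /\ Urdiv (eps b) m) <->
      (exists c, is_rlcm a b c)) /\
     ((exists c, is_rlcm a b c) <->
      (exists c, rdiv a c /\ rdiv b c)) /\
     (forall c, is_rlcm a b c -> U_is_rlcm (eps a) (eps b) (eps c)))
  /\
  (tgt a = tgt b ->
     ((exists m, U_is_llcm (eps a) (eps b) m) <->
      (exists m, Uldiv (eps a) m /\ Uldiv (eps b) m)) /\
     ((exists m, Uldiv (eps a) m /\ Uldiv (eps b) m) <->
      (exists c, is_llcm a b c)) /\
     ((exists c, is_llcm a b c) <->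
      (exists c, ldiv a c /\ ldiv b c)) /\
     (forall c, is_llcm a b c -> U_is_llcm (eps a) (eps b) (eps c))).
Proof.
  split; [apply rlcm_equivalences | apply llcm_equivalences]; exact HS.
Qed.
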